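(* Let $\mu>0$ and $\mathbf{C}>0$, and let all policies be restricted to the class $\Pi_{\mathbf{C}}$ of conditional densities bounded by $\mathbf{C}$ (defined in the context). Then for every bounded value function $V:\mathcal{S}\to\mathbb{R}$ and every $s\in\mathcal{S}$, $$\mathcal{B}_{\mu}V(s)-\mathcal{B}V(s)\in[\mu(1-\mathbf{C}),\,\mu].$$
   Context: Consider a Markov decision process with state space $\mathcal{S}$, continuous action space $\mathcal{A}\subseteq\mathbb{R}$ (Lebesgue measurable; $\sigma$ denotes Lebesgue measure), transition kernel $\mathbf{P}(\cdot\mid s,a)$, bounded reward function $R(s',s,a)$ and discount factor $\gamma\in[0,1)$. For a bounded $V:\mathcal{S}\to\mathbb{R}$ put $Q_V(s,a)=\mathbb{E}_{S'\sim\mathbf{P}(\cdot\mid s,a)}[R(S',s,a)+\gamma V(S')]$. (Standing assumption) Every policy considered is a conditional probability density $\pi(\cdot\mid s)$ on $\mathcal{A}$ (w.r.t. Lebesgue measure) with $\pi(a\mid s)\le\mathbf{C}$ for all $s,a$; denote this class by $\Pi_{\mathbf{C}}$. The Bellman operator is $\mathcal{B}V(s)=\sup_{\pi\in\Pi_{\mathbf{C}}}\int_{\mathcal{A}}Q_V(s,a)\pi(a\mid s)\,da$, and for $\mu>0$ the quasi-optimal Bellman operator is $$\mathcal{B}_{\mu}V(s)=\sup_{\pi\in\Pi_{\mathbf{C}}}\int_{\mathcal{A}}\Big[Q_V(s,a)\pi(a\mid s)+\mu\big(\pi(a\mid s)-\pi(a\mid s)^2\big)\Big]da .$$ *)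

From mathcomp Require Import all_boot all_order all_algebra.
Import Order.TTheory GRing.Theory Num.Theory.
From mathcomp Require Import all_classical all_reals all_analysis.
Set Implicit Arguments. Unset Strict Implicit. Unset Printing Implicit Defensive.
Local Open Scope classical_set_scope.
Local Open Scope ring_scope.

(* The real line equipped with the Lebesgue (i.e. completed Borel)
   sigma-algebra; its measure is [completed_lebesgue_measure]. *)
Notation LR R := (caratheodory_type (R:=R)
   (T:=lebesgue_stieltjes_measure_ocitv_type__canonical__measurable_structure_SemiRingOfSets R)
   (wlength idfun)^*%mu).

Definition Qfun {d} {T : measurableType d} {R : realType}
  (P : R.-pker (T * LR R) ~> T) (Rw : T -> T -> LR R -> R) (gamma : R)
  (V : T -> R) (s : T) (a : LR R) : R :=
  fine (\int[P (s, a)]_(s' in setT) (Rw s' s a + gamma * V s')%:E)%E.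

Definition is_policy {d} {T : measurableType d} {R : realType}
  (A : set (LR R)) (C : R) (pi : T -> LR R -> R) : Prop :=
  [/\ measurable_fun (setT `*` A) (fun p : T * LR R => pi p.1 p.2),
      (forall s a, A a -> 0 <= pi s a /\ pi s a <= C) &
      (forall s, (\int[completed_lebesgue_measure]_(a in A) (pi s a)%:E)%E = 1%E)].

Definition bellman {d} {T : measurableType d} {R : realType}
  (P : R.-pker (T * LR R) ~> T) (Rw : T -> T -> LR R -> R) (gamma : R)
  (A : set (LR R)) (C : R) (V : T -> R) (s : T) : R :=
  sup [set x | exists pi, is_policy A C pi /\
     x = fine (\int[completed_lebesgue_measure]_(a in A)
                 (Qfun P Rw gamma V s a * pi s a)%:E)%E].

Definition bellman_mu {d} {T : measurableType d} {R : realType}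
  (P : R.-pker (T * LR R) ~> T) (Rw : T -> T -> LR R -> R) (gamma : R)
  (A : set (LR R)) (C mu : R) (V : T -> R) (s : T) : R :=
  sup [set x | exists pi, is_policy A C pi /\
     x = fine (\int[completed_lebesgue_measure]_(a in A)
                 (Qfun P Rw gamma V s a * pi s a
                  + mu * (pi s a - pi s a ^+ 2))%:E)%E].

(* For a fixed policy pi the two objectives differ by
   mu * (1 - \int pi(a|s)^2 da), and 0 <= pi <= C with \int pi = 1 gives
   0 <= \int pi^2 <= C; so the gap lies in [mu (1 - C), mu] policy by policy.
   Since Q_V is bounded, both suprema are finite and a uniform bound on the
   gap of the objectives passes to the gap of their suprema. *)

From mathcomp Require Import all_boot all_order all_algebra.
Import Order.TTheory GRing.Theory Num.Theory.
From mathcomp Require Import all_classical all_reals all_analysis.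
From mathcomp Require Import lra.
(* Re-imported last: otherwise [measurable_fun] on [\bar R]-valued functions
   over a product space fails to elaborate. *)
From mathcomp Require Import measurable_realfun.

Set Implicit Arguments.
Unset Strict Implicit.
Unset Printing Implicit Defensive.

Local Open Scope classical_set_scope.
Local Open Scope ring_scope.

Lemma measurable_fun_integral_sfinite_kernel_EFin d d'
    (X : measurableType d) (Y : measurableType d') (R : realType)
    (l : R.-sfker X ~> Y) (f : X * Y -> R) :
  measurable_fun [set: X * Y] f ->
  measurable_fun [set: X] (fun x => \int[l x]_y (f (x, y))%:E)%E.
Proof.
move=> /measurable_EFinP mf.
have -> : (fun x => \int[l x]_y (f (x, y))%:E)%E =
    (fun x => \int[l x]_y (EFin \o f)^\+ (x, y) - \int[l x]_y (EFin \o f)^\- (x, y))%E.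
  apply/funext => x; rewrite integralE.
  by congr (_ - _)%E; apply: eq_integral => y _; rewrite !(funeposE, funenegE).
by apply: emeasurable_funB; apply: measurable_fun_integral_sfinite_kernel;
  [exact: funepos_ge0 | exact: measurable_funepos
  | exact: funeneg_ge0 | exact: measurable_funeneg].
Qed.

Lemma measurable_fun_pair2_setX d1 d2 d3 (X : measurableType d1)
    (Y : measurableType d2) (Z : measurableType d3) (A : set Y) (f : X * Y -> Z) (x : X) :
  measurable A -> measurable_fun (setT `*` A) f -> measurable_fun A (fun y => f (x, y)).
Proof.
move=> mA mf; have xA : pair x @` A `<=` setT `*` A by move=> _ [y Ay <-].
exact: measurable_comp (measurableX measurableT mA) xA mf
  (measurable_funTS (pair1_measurable x)).
Qed.

Section bounded_density.
Context d (X : measurableType d) (R : realType) (m : {measure set X -> \bar R}).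
Variables (D : set X) (p : X -> R) (C : R).
Hypotheses (mD : measurable D) (mp : measurable_fun D p)
  (p_bounds : forall x, D x -> 0 <= p x /\ p x <= C)
  (p_int1 : (\int[m]_(x in D) (p x)%:E = 1)%E).

Lemma integrable_density : m.-integrable D (EFin \o p).
Proof.
apply/integrableP; split; first exact/measurable_EFinP.
rewrite (eq_integral (fun x => (p x)%:E)) ?p_int1 ?ltry// => x /[!inE] Dx.
by rewrite abse_EFin ger0_norm //; case: (p_bounds Dx).
Qed.

Lemma integral_scaled_density k : (\int[m]_(x in D) (k * p x)%:E = k%:E)%E.
Proof.
under eq_integral do rewrite EFinM.
by rewrite (integralZl mD integrable_density) p_int1 mule1.
Qed.

Section bounded_factor.
Variables (q : X -> R) (K : R).
Hypotheses (mq : measurable_fun D q) (qK : forall x, D x -> `|q x| <= K).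

Let abs_mul_density_le x : D x -> `|q x * p x| <= K * p x.
Proof.
move=> Dx; have [p0 _] := p_bounds Dx.
by rewrite normrM (ger0_norm p0) ler_wpM2r // qK.
Qed.

Lemma integrable_mul_density : m.-integrable D (EFin \o (fun x => q x * p x)).
Proof.
apply: (le_integrable mD _ _ (integrableZl mD K integrable_density)).
  exact/measurable_EFinP/measurable_funM.
by move=> x Dx; rewrite lee_fin (le_trans (abs_mul_density_le Dx)) ?ler_norm.
Qed.

Lemma abs_fine_integral_mul_density_le :
  `|fine (\int[m]_(x in D) (q x * p x)%:E)%E| <= K.
Proof.
rewrite -lee_fin -abse_EFin fineK; last exact: integrable_fin_num integrable_mul_density.
apply: le_trans (le_abse_integral m mD _) _; first exact/measurable_EFinP/measurable_funM.
rewrite -integral_scaled_density; apply: ge0_le_integral => //.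
- by apply/measurableT_comp => //; exact/measurable_EFinP/measurable_funM.
- exact/measurable_EFinP/measurable_funM.
Qed.

End bounded_factor.

Lemma integrable_density_sqr : m.-integrable D (EFin \o (fun x => p x ^+ 2)).
Proof.
apply: (@integrable_mul_density p C mp) => x Dx.
by have [p0 pC] := p_bounds Dx; rewrite ger0_norm.
Qed.

Lemma fine_integral_density_sqr_ge0 : 0 <= fine (\int[m]_(x in D) (p x ^+ 2)%:E)%E.
Proof.
by apply/fine_ge0/integral_ge0 => x Dx; rewrite lee_fin sqr_ge0.
Qed.

Lemma fine_integral_density_sqr_le : fine (\int[m]_(x in D) (p x ^+ 2)%:E)%E <= C.
Proof.
rewrite -lee_fin fineK; last exact: integrable_fin_num integrable_density_sqr.
rewrite -integral_scaled_density; apply: le_integral => //.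
- exact: integrable_density_sqr.
- exact: integrableZl integrable_density.
- move=> x /[!inE] Dx; have [p0 pC] := p_bounds Dx.
  by rewrite lee_fin expr2 ler_wpM2r.
Qed.

Lemma fine_integral_regularized (q : X -> R) (mu : R) :
  m.-integrable D (EFin \o (fun x => q x * p x)) ->
  fine (\int[m]_(x in D) (q x * p x + mu * (p x - p x ^+ 2))%:E)%E
  = fine (\int[m]_(x in D) (q x * p x)%:E)%E
    + mu * (1 - fine (\int[m]_(x in D) (p x ^+ 2)%:E)%E).
Proof.
move=> iqp.
have ip := integrable_density; have ip2 := integrable_density_sqr.
have ipp2 := integrableB mD ip ip2.
rewrite (eq_integral (fun x => (q x * p x)%:E + mu%:E * (p x - p x ^+ 2)%:E)%E) //.
rewrite integralD //; last exact: integrableZl ipp2.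
rewrite integralZl // integralB_EFin //.
(* [rewrite p_int1] fails: the integrand produced by [integralB_EFin]
   reaches [\bar R] through a different coercion path. *)
have -> : (\int[m]_(x in D) (p x)%:E = 1)%E := p_int1.
rewrite -[in LHS](fineK (integrable_fin_num mD ip2)) -[in LHS](fineK (integrable_fin_num mD iqp)).
by rewrite -EFinB -EFinM -EFinD.
Qed.

Lemma regularized_gap_bounds (q : X -> R) (mu : R) :
  m.-integrable D (EFin \o (fun x => q x * p x)) -> 0 <= mu ->
  let gap := fine (\int[m]_(x in D) (q x * p x + mu * (p x - p x ^+ 2))%:E)%E
             - fine (\int[m]_(x in D) (q x * p x)%:E)%E in
  mu * (1 - C) <= gap /\ gap <= mu.
Proof.
move=> iqp mu0 /=; rewrite fine_integral_regularized //.
have := fine_integral_density_sqr_ge0; have := fine_integral_density_sqr_le.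
split; nra.
Qed.

End bounded_density.

Lemma abs_fine_integral_le d (X : measurableType d) (R : realType)
    (m : {measure set X -> \bar R}) (f : X -> R) (K : R) :
  m setT = 1%E -> measurable_fun setT f -> (forall x, `|f x| <= K) ->
  `|fine (\int[m]_x (f x)%:E)%E| <= K.
Proof.
move=> m1 mf fK.
(* [m] has density [cst 1] with respect to itself. *)
have int1 : (\int[m]_x (cst 1 x)%:E = 1)%E.
  by rewrite (eq_integral (cst 1%E)) // integral_cst // m1 mule1.
have := abs_fine_integral_mul_density_le measurableT (measurable_cst _)
  (fun x _ => conj ler01 (lexx 1)) int1 mf (fun x _ => fK x).
by under eq_integral do rewrite mulr1.
Qed.

Section sup_over.
Variables (R : realType) (U : Type) (Q : U -> Prop).
Local Notation sup_over f := (sup [set x | exists u, Q u /\ x = f u]).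

Lemma sup_over_le_addr (f g : U -> R) (K c : R) :
  (exists u, Q u) -> (forall u, Q u -> g u <= K) ->
  (forall u, Q u -> f u <= g u + c) -> sup_over f <= sup_over g + c.
Proof.
move=> [u0 Qu0] gK fgc.
have g_sup : has_sup [set x | exists u, Q u /\ x = g u].
  by split; [exists (g u0), u0 | exists K => _ [u [Qu ->]]; exact: gK].
apply: ge_sup; first by exists (f u0), u0.
move=> _ [u [Qu ->]]; apply: le_trans (fgc u Qu) _.
by rewrite lerD2r; apply: sup_upper_bound g_sup _ _; exists u.
Qed.

Lemma sup_over_sub_bounds (I J : U -> R) (K a b : R) :
  (exists u, Q u) -> (forall u, Q u -> I u <= K) ->
  (forall u, Q u -> a <= J u - I u /\ J u - I u <= b) ->
  a <= sup_over J - sup_over I /\ sup_over J - sup_over I <= b.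
Proof.
move=> Qne IK IJab.
have JIb : sup_over J <= sup_over I + b.
  by apply: sup_over_le_addr Qne IK _ => u /IJab[_]; rewrite lerBlDl addrC.
have IJa : sup_over I <= sup_over J + - a.
  apply: (sup_over_le_addr (K := K + b) Qne) => u Qu.
    by have [_] := IJab u Qu; have := IK u Qu; lra.
  by have [] := IJab u Qu; lra.
by split; lra.
Qed.

End sup_over.

Section Q_value.
Context d (T : measurableType d) (R : realType) (P : R.-pker (T * LR R) ~> T).
Variables (Rw : T -> T -> LR R -> R) (gamma : R) (V : T -> R).
Hypotheses (mRw : measurable_fun setT (fun p : T * (T * LR R) => Rw p.1 p.2.1 p.2.2))
  (mV : measurable_fun setT V).

Let mQintegrand :
  measurable_fun setT (fun z : (T * LR R) * T => Rw z.2 z.1.1 z.1.2 + gamma * V z.2).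
Proof.
apply: measurable_funD.
  exact: measurableT_comp mRw (measurable_fun_pair measurable_snd measurable_fst).
exact/measurable_funM/measurableT_comp.
Qed.

Lemma measurable_Qfun s : measurable_fun setT (Qfun P Rw gamma V s).
Proof.
apply: measurableT_comp (fine_measurable measurableT) _.
exact: measurable_fun_pair2 s (measurable_fun_integral_sfinite_kernel_EFin P mQintegrand).
Qed.

Lemma abs_Qfun_le M1 M2 s a : 0 <= gamma ->
  (forall s' s0 a0, `|Rw s' s0 a0| <= M1) -> (forall s', `|V s'| <= M2) ->
  `|Qfun P Rw gamma V s a| <= M1 + gamma * M2.
Proof.
move=> gamma0 RwM1 VM2; apply: abs_fine_integral_le.
- exact: prob_kernel.
- exact: measurable_fun_pair2 (s, a) mQintegrand.
- move=> s'; apply: le_trans (ler_normD _ _) _.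
  by rewrite normrM (ger0_norm gamma0) lerD // ler_wpM2l.
Qed.

End Q_value.

Theorem theorem1 (d : measure_display) (T : measurableType d) (R : realType)
  (P : R.-pker (T * LR R) ~> T) (Rw : T -> T -> LR R -> R) (gamma : R)
  (A : set (LR R)) (C mu : R) (V : T -> R) (s : T) :
  measurable A ->
  measurable_fun setT (fun p : T * (T * LR R) => Rw p.1 p.2.1 p.2.2) ->
  (exists M : R, forall s' s0 a, `|Rw s' s0 a| <= M) ->
  0 <= gamma < 1 ->
  0 < mu -> 0 < C ->
  (exists pi : T -> LR R -> R, is_policy A C pi) ->
  measurable_fun setT V ->
  (exists M : R, forall s', `|V s'| <= M) ->
  mu * (1 - C) <= bellman_mu P Rw gamma A C mu V s - bellman P Rw gamma A C V s
  /\ bellman_mu P Rw gamma A C mu V s - bellman P Rw gamma A C V s <= mu.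
Proof.
move=> mA mRw [M1 RwM1] /andP[gamma0 _] mu0 _ policy_ex mV [M2 VM2].
set Q := Qfun P Rw gamma V s.
have mQ : measurable_fun A Q := measurable_funTS (measurable_Qfun P gamma mRw mV s).
have QK a : A a -> `|Q a| <= M1 + gamma * M2.
  by move=> _; exact: abs_Qfun_le.
apply: (sup_over_sub_bounds (K := M1 + gamma * M2) policy_ex).
- move=> pi [mpi pi_bounds pi_int1].
  have mpis : measurable_fun A (pi s) := measurable_fun_pair2_setX s mA mpi.
  apply: le_trans (ler_norm _) _.
  (* Plain [exact]: the measure in [pi_int1] matches the goal only after
     unfolding its canonical instance. *)
  exact (abs_fine_integral_mul_density_le mA mpis (pi_bounds s) (pi_int1 s) mQ QK).
- move=> pi [mpi pi_bounds pi_int1].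
  have mpis : measurable_fun A (pi s) := measurable_fun_pair2_setX s mA mpi.
  refine (regularized_gap_bounds mA mpis (pi_bounds s) (pi_int1 s) _ (ltW mu0)).
  exact (integrable_mul_density mA mpis (pi_bounds s) (pi_int1 s) mQ QK).
Qed.
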